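(* Let $m\in\mathbb{N}$, $r\in\{1,\dots,m\}$, and let $v$ be a vertex of $D_m$ of generation number $r$. Then the set $\{x\in V(D_m): d_{D_m}(x,v)\le 2^{r-1}\}$ is contained in a subdiamond of $D_m$ of height $2^r$.
   Context: Diamonds: $D_0$ is an edge; $D_i$ is obtained from $D_{i-1}$ by replacing each edge $uv$ by a quadrilateral $u,a,v,b$; $D_m$ has the shortest path metric with unit edges. Generation number $r$ ($1\le r\le m$) consists of the vertices of $D_{m-r+1}$ not belonging to $D_{m-r}$ (so generation $1$ are the vertices added in the last step; the two vertices of $D_0$ belong to no generation). A subdiamond of $D_m$ is the set of vertices that evolved from a single edge $e$ of some $D_j$, $0\le j\le m$, including the endpoints of $e$ (its top and bottom); its height is the distance between top and bottom, $2^{m-j}$. *)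

From mathcomp Require Import all_boot.
Set Implicit Arguments. Unset Strict Implicit. Unset Printing Implicit Defensive.

(* Vertices: [inl false] = bottom of D_0, [inl true] = top of D_0,
   [inr (s, c)] = the c-th new vertex (c : bool, i.e. "a" or "b") created when
   the edge with address s of D_(size s) is replaced by a quadrilateral. *)
Definition dvert := (bool + (seq (bool * bool) * bool))%type.

(* Edge addresses: an edge of D_j is a sequence of j pairs (c, h): at each
   step, the edge u--w (oriented bottom to top) is replaced by u,a,w,b; the
   pair (c, h) selects the new vertex (a if c = false, b if c = true) and the
   half (h = false: u--new, h = true: new--w). *)
Fixpoint dends_aux (u w : dvert) (pre s : seq (bool * bool)) : dvert * dvert :=
  match s with
  | [::] => (u, w)
  | (c, h) :: t =>
      let n : dvert := inr (pre, c) in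
      if h then dends_aux n w (rcons pre (c, h)) t
      else dends_aux u n (rcons pre (c, h)) t
  end.

Definition dends (e : seq (bool * bool)) : dvert * dvert :=
  dends_aux (inl false) (inl true) [::] e.

(* x is a vertex of D_j (every vertex of D_j is an endpoint of an edge of D_j) *)
Definition is_dvertex (j : nat) (x : dvert) : Prop :=
  exists e, size e = j /\ (x = (dends e).1 \/ x = (dends e).2).

Definition dadj (m : nat) (x y : dvert) : Prop :=
  exists e, size e = m /\ (dends e = (x, y) \/ dends e = (y, x)).

Inductive dwalk (m : nat) : dvert -> dvert -> nat -> Prop :=
  | dwalk0 x : dwalk m x x 0
  | dwalkS x y z n : dadj m x y -> dwalk m y z n -> dwalk m x z n.+1.

Definition ddist_le (m : nat) (x y : dvert) (k : nat) : Prop :=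
  exists2 n, n <= k & dwalk m x y n.

Definition dgeneration (m r : nat) (v : dvert) : Prop :=
  is_dvertex (m - r + 1) v /\ ~ is_dvertex (m - r) v.

(* vertices of D_m evolved from the edge with address e (an edge of D_(size e)),
   including its endpoints *)
Definition subdiamond (m : nat) (e : seq (bool * bool)) (x : dvert) : Prop :=
  exists t, size (e ++ t) = m /\
            (x = (dends (e ++ t)).1 \/ x = (dends (e ++ t)).2).

Definition subdiamond_height (m : nat) (e : seq (bool * bool)) : nat :=
  2 ^ (m - size e).

From mathcomp Require Import all_boot zify.

Set Implicit Arguments.
Unset Strict Implicit.

(* A vertex v of generation r is the vertex created on some edge q of D_(m-r);
   the subdiamond evolved from q is the claimed one.  The argument uses the
   height function of D_m, placing the bottom of D_0 at 0 and its top at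
   2^m: in D_m the
   edge with address e has its bottom at height [base m e] and its top
   2^(m - |e|) higher, so adjacent vertices have heights differing by 1 and
   the height changes by at most n along a walk of length n.  The vertex v
   sits at height [base m q] + 2^(r-1), exactly midway between the two ends
   of q.  Finally, the only vertices of the subdiamond of q that also lie on
   edges outside it are the two ends of q.  Following a walk of length at
   most 2^(r-1) backwards from v, every intermediate vertex is strictly
   closer than 2^(r-1) in height to v, hence not an end of q, so every edge
   of the walk stays inside the subdiamond of q. *)

Definition dend (e : seq (bool * bool)) (x : dvert) : Prop :=
  x = (dends e).1 \/ x = (dends e).2.

Lemma dends_aux_cat s1 s2 u w pre :
  dends_aux u w pre (s1 ++ s2) =
  dends_aux (dends_aux u w pre s1).1 (dends_aux u w pre s1).2 (pre ++ s1) s2.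
Proof.
elim: s1 u w pre => [|[c h] t IH] u w pre /=; first by rewrite cats0.
by case: h; rewrite IH cat_rcons.
Qed.

Lemma dends_aux_nseq_top k u w pre :
  (dends_aux u w pre (nseq k (false, true))).2 = w.
Proof. by elim: k u w pre => //= k IH u w pre; apply: IH. Qed.

Lemma dends_aux_nseq_bot k u w pre :
  (dends_aux u w pre (nseq k (false, false))).1 = u.
Proof. by elim: k u w pre => //= k IH u w pre; apply: IH. Qed.

Lemma dends_new_top q c k :
  (dends (q ++ (c, false) :: nseq k (false, true))).2 = inr (q, c).
Proof. by rewrite /dends dends_aux_cat /= dends_aux_nseq_top. Qed.

Lemma dends_aux_endpoint s u w pre x :
  (x = (dends_aux u w pre s).1 \/ x = (dends_aux u w pre s).2) ->
  [\/ x = u, x = w |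
      exists q c h t, s = q ++ (c, h) :: t /\ x = inr (pre ++ q, c)].
Proof.
elim: s u w pre => [|[c h] t IH] u w pre /=.
  by case=> ->; [apply: Or31 | apply: Or32].
case: h => Hx; case: (IH _ _ _ Hx) => [->|->|[q [c' [h' [t' [-> ->]]]]]].
- by apply: Or33; exists [::], c, true, t; rewrite cats0.
- exact: Or32.
- by apply: Or33; exists ((c, true) :: q), c', h', t'; rewrite cat_rcons.
- exact: Or31.
- by apply: Or33; exists [::], c, false, t; rewrite cats0.
- by apply: Or33; exists ((c, false) :: q), c', h', t'; rewrite cat_rcons.
Qed.

(* [base k s]: height, in D_k, of the bottom of the edge with address [s];
   choosing the upper half at step i raises the bottom by 2^(k-1-i). *)
Fixpoint base (k : nat) (s : seq (bool * bool)) : nat :=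
  if s is p :: t then p.2 * 2 ^ k.-1 + base k.-1 t else 0.

Lemma base_rcons k s p : base k (rcons s p) = base k s + p.2 * 2 ^ (k - size s).-1.
Proof.
elim: s k => [|y s IH] k /=; first by rewrite subn0 addn0.
by rewrite IH addnA (_ : k.-1 - size s = k - (size s).+1) //; lia.
Qed.

(* Height of a vertex in D_m: the bottom and top of D_0 are at 0 and 2^m; the
   vertex created on an edge is the top of its lower half. *)
Definition vheight (m : nat) (x : dvert) : nat :=
  match x with
  | inl b => if b then 2 ^ m else 0
  | inr (p, c) => base m (rcons p (c, true))
  end.

Lemma vheight_new m q c :
  vheight m (inr (q, c)) = base m q + 2 ^ (m - size q).-1.
Proof. by rewrite /= base_rcons mul1n. Qed.

Lemma vheight_dends_aux m s pre u w :
  size pre + size s <= m ->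
  vheight m u = base m pre -> vheight m w = base m pre + 2 ^ (m - size pre) ->
  vheight m (dends_aux u w pre s).1 = base m (pre ++ s) /\
  vheight m (dends_aux u w pre s).2 = base m (pre ++ s) + 2 ^ (m - size (pre ++ s)).
Proof.
elim: s pre u w => [|[c h] t IH] pre u w /= Hs Hu Hw; first by rewrite cats0.
rewrite -cat_rcons.
have [K HK] : exists K, m - size pre = K.+1 by exists (m - size pre).-1; lia.
have Hsub : m - size (rcons pre (c, h)) = K by rewrite size_rcons; lia.
have Hb : base m (rcons pre (c, h)) = base m pre + h * 2 ^ K.
  by rewrite base_rcons HK.
have Hn : vheight m (inr (pre, c)) = base m pre + 2 ^ K.
  by rewrite vheight_new HK.
have Hdouble : 2 ^ K.+1 = 2 * 2 ^ K := expnS 2 K.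
rewrite HK in Hw.
by case: h Hsub Hb => /= Hsub Hb; apply: IH; rewrite ?Hsub ?size_rcons; lia.
Qed.

Lemma vheight_dends m e : size e <= m ->
  vheight m (dends e).1 = base m e /\
  vheight m (dends e).2 = base m e + 2 ^ (m - size e).
Proof. by move=> He; apply: vheight_dends_aux => //=; rewrite subn0. Qed.

Lemma dadj_vheight m x y : dadj m x y ->
  vheight m x + 1 = vheight m y \/ vheight m y + 1 = vheight m x.
Proof.
case=> e [He Hxy]; have [Hbot Htop] := vheight_dends (eq_leq He).
rewrite He subnn expn0 in Htop.
by case: Hxy => Hd; rewrite Hd /= in Hbot Htop *; rewrite Hbot Htop; auto.
Qed.

Lemma dwalk_vheight m x y n : dwalk m x y n ->
  vheight m y <= vheight m x + n /\ vheight m x <= vheight m y + n.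
Proof.
elim=> [z|x' y' z n' /dadj_vheight Hstep _ [IH1 IH2]]; first by rewrite addn0.
by case: Hstep; lia.
Qed.

(* A vertex of the subdiamond of [q] lying on an edge [e] outside it is one of
   the two ends of [q]: vertices created inside the subdiamond only lie on
   edges whose address extends [q]. *)
Lemma subdiamond_boundary q t e x :
  dend (q ++ t) x -> dend e x -> take (size q) e != q -> dend q x.
Proof.
rewrite /dend /dends dends_aux_cat => Hx1 Hx2 Hne.
case: (dends_aux_endpoint Hx1) => [->|->|[q1 [c1 [h1 [t1 [_ Ex]]]]]];
  [by left | by right |].
case: (dends_aux_endpoint Hx2) => [E|E|[q2 [c2 [h2 [t2 [Ee E]]]]]];
  rewrite Ex // in E.
by move: Hne E; rewrite Ee /= => + [Eq _]; rewrite -Eq -catA take_size_cat ?eqxx.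
Qed.

Lemma subdiamond_dend m q e x :
  size e = m -> take (size q) e = q -> dend e x -> subdiamond m q x.
Proof.
move=> He Hq Hx; exists (drop (size q) e).
suff -> : q ++ drop (size q) e = e by [].
by rewrite -{1}Hq cat_take_drop.
Qed.

Lemma subdiamond_new_vertex m q c :
  size q < m -> subdiamond m q (inr (q, c)).
Proof.
move=> Hq; exists ((c, false) :: nseq (m - size q).-1 (false, true)).
by split; [rewrite size_cat /= size_nseq; lia | right; rewrite dends_new_top].
Qed.

Lemma is_dvertex_root j b : is_dvertex j (inl b).
Proof.
case: b.
- exists (nseq j (false, true)); split; first exact: size_nseq.
  by right; rewrite /dends dends_aux_nseq_top.
- exists (nseq j (false, false)); split; first exact: size_nseq.
  by left; rewrite /dends dends_aux_nseq_bot.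
Qed.

Lemma is_dvertex_new j q c : size q < j -> is_dvertex j (inr (q, c)).
Proof. by move=> /(subdiamond_new_vertex c) [t Ht]; exists (q ++ t). Qed.

Lemma new_vertex_of_level j v :
  is_dvertex j.+1 v -> ~ is_dvertex j v ->
  exists q c, size q = j /\ v = inr (q, c).
Proof.
move=> [e [He Hv]] Hold.
case: (dends_aux_endpoint Hv) Hold => [->|->|[q [c [h [t [Ee ->]]]]]] Hold;
  try by case: Hold; apply: is_dvertex_root.
exists q, c; split=> //.
have : size q < j.+1 by rewrite -He Ee size_cat /=; lia.
rewrite ltnS leq_eqVlt => /orP[/eqP // | Hlt].
by case: Hold; apply: is_dvertex_new.
Qed.

Lemma ball_in_subdiamond m q c n x :
  size q < m -> dwalk m x (inr (q, c)) n -> n <= 2 ^ (m - size q).-1 ->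
  subdiamond m q x.
Proof.
move=> Hq; move Ev : (inr (q, c)) => v Hw.
have [Hbot Htop] := vheight_dends (ltnW Hq).
have Hv := vheight_new m q c.
have Hhalf : 2 ^ (m - size q) = 2 * 2 ^ (m - size q).-1.
  by rewrite -expnS prednK ?subn_gt0.
elim: Hw Ev => [y <- _ | x' y z n' Hadj Hw IH Ez Hn].
  exact: subdiamond_new_vertex.
have Hy : subdiamond m q y by apply: IH; rewrite // ltnW.
have [Hfar1 Hfar2] : vheight m z <= vheight m y + n' /\
                     vheight m y <= vheight m z + n'.
  exact: dwalk_vheight Hw.
case: Hadj => e [He Hxy].
have [Hxe Hye] : dend e x' /\ dend e y.
  by rewrite /dend; case: Hxy => ->; [split; [left | right] | split; [right | left]].
have [/eqP Hext | Hout] := boolP (take (size q) e == q).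
  exact: subdiamond_dend Hext Hxe.
case: Hy => t [_ Hyt].
case: (subdiamond_boundary Hyt Hye Hout) => Ey;
  rewrite -Ez Ey ?Hbot ?Htop Hv in Hfar1 Hfar2; lia.
Qed.

Theorem mainTheorem9 (m r : nat) (v : dvert) :
  1 <= r <= m ->
  dgeneration m r v ->
  exists e : seq (bool * bool),
    size e <= m /\ subdiamond_height m e = 2 ^ r /\
    (forall x : dvert, is_dvertex m x -> ddist_le m x v (2 ^ r.-1) ->
       subdiamond m e x).
Proof.
move=> /andP[r_gt0 r_le_m] [Hnew Hold].
rewrite addn1 in Hnew.
have [q [c [Hq ->]]] := new_vertex_of_level Hnew Hold.
have Hr : m - size q = r by rewrite Hq subKn.
exists q; split; first by rewrite Hq leq_subr.
split; first by rewrite /subdiamond_height Hr.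
move=> x _ [n Hn Hw]; apply: ball_in_subdiamond Hw _; first by lia.
by rewrite Hr.
Qed.
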